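(* Fix an integer $p\ge 0$ and a subinterval $I_n=[t_n,t_{n+1}]$ of a partition of $[0,T]$, with initial value $u_n=u(t_n)$. Let $U_h=[u_h(t_{n,0}),\dots,u_h(t_{n,p})]^T$ be the nodal values of the DG approximation on $I_n$, i.e. the solution of $LU_h+\frac{\Delta t_n}{2}F(U_h)+B=0$. Consider the fixed-point iteration $$U^{k+1}=-\frac{\Delta t_n}{2}L^{-1}F(U^k)-L^{-1}B,\qquad k=0,1,\dots,$$ where $F$ is the exactly integrated nonlinear vector, and $U^0$ is the explicit-Euler initial iterate. Then for every $K\ge 0$, $$u_h(t_{n,m})-u^K_{n,m}=\mathcal{O}\left(h^{K+2}\right),\qquad m=0,\dots,p,$$ as $h=\max_n\Delta t_n\to 0$, where $U^K=[u^K_{n,0},\dots,u^K_{n,p}]^T$.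
   Context: Initial value problem: $u'(t)=f(t,u(t))$ for $t\in[0,T]$, $u(0)=u_0\in\mathbb{R}$, with $f:\mathbb{R}\times\mathbb{R}\to\mathbb{R}$ sufficiently smooth (of class $\mathcal{C}^{2p+1}$) and Lipschitz in $u$; $u$ denotes the exact solution. Partition $0=t_0<t_1<\dots<t_N=T$, $I_n=[t_n,t_{n+1}]$, $\Delta t_n=t_{n+1}-t_n$, $h=\max_n\Delta t_n$. On the reference interval $[-1,1]$ let $-1<\tau_0<\tau_1<\dots<\tau_p=1$ be the $p+1$ right Gauss–Radau points (including the right endpoint; the quadrature $\int_{-1}^1 g\approx\sum_j\omega_j g(\tau_j)$ with the corresponding weights $\omega_j$ is exact for polynomials of degree $\le 2p$), and $\ell_0,\dots,\ell_p$ the Lagrange polynomials of degree $p$ with $\ell_i(\tau_j)=\delta_{ij}$. Nodes on $I_n$: $t_{n,m}=t_n+\frac{(\tau_m+1)\Delta t_n}{2}$, so $t_{n,p}=t_{n+1}$. Define the $(p+1)\times(p+1)$ matrix $L_{i,j}=\int_{-1}^1\ell_i'(\tau)\ell_j(\tau)\,d\tau-\delta_{ip}\delta_{jp}$ (invertible), the vector $B=u_n[\ell_0(-1),\dots,\ell_p(-1)]^T$, and for $U=[u_{n,0},\dots,u_{n,p}]^T$ the vectors $F(U)_j=\int_{-1}^1 f\big(t_n+\tfrac{(\tau+1)\Delta t_n}{2},\sum_{m=0}^p u_{n,m}\ell_m(\tau)\big)\ell_j(\tau)\,d\tau$ and $F_\omega(U)_j=\omega_j f(t_{n,j},u_{n,j})$,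 $j=0,\dots,p$. The DG approximation $u_h$ on $I_n$ is the degree-$p$ polynomial $u_h(t)=\sum_m u_h(t_{n,m})\ell_m(\tau)$ ($t=t_n+\frac{(\tau+1)\Delta t_n}{2}$) whose nodal vector $U_h$ solves $LU_h+\frac{\Delta t_n}{2}F(U_h)+B=0$ (exists uniquely for $h$ small); the DG step value is $u_{n+1}=u_h(t_{n,p})$. The explicit-Euler initial iterate is $u^0_{n,0}=u_n+(t_{n,0}-t_n)f(t_n,u_n)$, $u^0_{n,m+1}=u^0_{n,m}+(t_{n,m+1}-t_{n,m})f(t_{n,m},u^0_{n,m})$; the implicit-Euler initial iterate is $u^0_{n,0}=u_n+(t_{n,0}-t_n)f(t_{n,0},u^0_{n,0})$, $u^0_{n,m+1}=u^0_{n,m}+(t_{n,m+1}-t_{n,m})f(t_{n,m+1},u^0_{n,m+1})$. All $\mathcal{O}(\cdot)$ constants are independent of $n$ and $h$. *)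

From Stdlib Require Import Reals Lra Classical ClassicalEpsilon.
Open Scope R_scope.

(* Derivative of a real function at a point (0 if not differentiable). *)
Definition Deriv (g : R -> R) (x : R) : R :=
  match excluded_middle_informative (exists l, derivable_pt_lim g x l) with
  | left H => proj1_sig (constructive_indefinite_description _ H)
  | right _ => 0
  end.

(* Riemann integral of g over [a,b] (0 if not Riemann integrable). *)
Definition RInt (g : R -> R) (a b : R) : R :=
  match excluded_middle_informative (exists pr : Riemann_integrable g a b, True) with
  | left H => RiemannInt (proj1_sig (constructive_indefinite_description _ H))
  | right _ => 0
  end.

Fixpoint prodR (n : nat) (g : nat -> R) : R :=
  match n with
  | O => 1
  | S k => prodR k g * g k
  end.

Definition poly_deg_le (d : nat) (g : R -> R) : Prop :=
  exists c : nat -> R, forall x, g x = sum_f_R0 (fun i => c i * x ^ i) d.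

Definition continuous2 (g : R -> R -> R) : Prop :=
  forall t x eps, 0 < eps -> exists d, 0 < d /\
    forall s y, Rabs (s - t) < d -> Rabs (y - x) < d -> Rabs (g s y - g t x) < eps.

(* f : R x R -> R is of class C^k: there is a family D i j of partial
   derivatives (d/dt)^i (d/du)^j f, all continuous for i + j <= k. *)
Definition C_k2 (k : nat) (f : R -> R -> R) : Prop :=
  exists D : nat -> nat -> R -> R -> R,
    D O O = f /\
    (forall i j, (i + j <= k)%nat -> continuous2 (D i j)) /\
    (forall i j, (i + j < k)%nat -> forall t x,
        derivable_pt_lim (fun s => D i j s x) t (D (S i) j t x) /\
        derivable_pt_lim (fun y => D i j t y) x (D i (S j) t x)).

Definition lipschitz_in_u (f : R -> R -> R) : Prop :=
  exists Lf, 0 <= Lf /\ forall t x y, Rabs (f t x - f t y) <= Lf * Rabs (x - y).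

Definition right_gauss_radau (p : nat) (tau w : nat -> R) : Prop :=
  -1 < tau O /\ (forall m, (m < p)%nat -> tau m < tau (S m)) /\ tau p = 1 /\
  forall g, poly_deg_le (2 * p) g ->
    sum_f_R0 (fun j => w j * g (tau j)) p = RInt g (-1) 1.

Definition lagr (p : nat) (tau : nat -> R) (i : nat) (x : R) : R :=
  prodR (S p) (fun j => if Nat.eq_dec j i then 1 else (x - tau j) / (tau i - tau j)).

Definition Lmat (p : nat) (tau : nat -> R) (i j : nat) : R :=
  RInt (fun x => Deriv (lagr p tau i) x * lagr p tau j x) (-1) 1
  - (if Nat.eq_dec i p then if Nat.eq_dec j p then 1 else 0 else 0).

Definition Lmul (p : nat) (tau : nat -> R) (U : nat -> R) (i : nat) : R :=
  sum_f_R0 (fun j => Lmat p tau i j * U j) p.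

Definition Bvec (p : nat) (tau : nat -> R) (un : R) (i : nat) : R :=
  un * lagr p tau i (-1).

Definition Fvec (p : nat) (tau : nat -> R) (f : R -> R -> R) (tn dt : R)
    (U : nat -> R) (j : nat) : R :=
  RInt (fun x => f (tn + (x + 1) * dt / 2)
                   (sum_f_R0 (fun m => U m * lagr p tau m x) p)
                 * lagr p tau j x) (-1) 1.

Definition node (tau : nat -> R) (tn dt : R) (m : nat) : R :=
  tn + (tau m + 1) * dt / 2.

Fixpoint euler0 (tau : nat -> R) (f : R -> R -> R) (tn dt un : R) (m : nat) : R :=
  match m with
  | O => un + (node tau tn dt O - tn) * f tn un
  | S k => euler0 tau f tn dt un k
           + (node tau tn dt (S k) - node tau tn dt k)
             * f (node tau tn dt k) (euler0 tau f tn dt un k)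
  end.

Definition dg_system (p : nat) (tau : nat -> R) (f : R -> R -> R) (tn dt un : R)
    (U : nat -> R) : Prop :=
  forall i, (i <= p)%nat ->
    Lmul p tau U i + dt / 2 * Fvec p tau f tn dt U i + Bvec p tau un i = 0.

(* Fixed-point iteration U^{k+1} = -dt/2 L^{-1} F(U^k) - L^{-1} B, written
   equivalently (L invertible) as L U^{k+1} = -dt/2 F(U^k) - B,
   started from the explicit-Euler iterate. *)
Definition fp_iteration (p : nat) (tau : nat -> R) (f : R -> R -> R) (tn dt un : R)
    (Useq : nat -> nat -> R) : Prop :=
  (forall m, (m <= p)%nat -> Useq O m = euler0 tau f tn dt un m) /\
  (forall k i, (i <= p)%nat ->
     Lmul p tau (Useq (S k)) i = - (dt / 2) * Fvec p tau f tn dt (Useq k) i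
                                 - Bvec p tau un i).

From Pilot Require Import Defs.
From Stdlib Require Import Reals Lra Lia FunctionalExtensionality ClassicalEpsilon.
From Coquelicot Require Import Coquelicot.
From mathcomp Require all_boot all_algebra Rstruct.
Open Scope R_scope.

(* L is invertible: if L V = 0 and Q interpolates V at the Radau nodes, summing the equations
   against the nodal values of any phi of degree <= p and integrating by parts gives
   phi(-1) Q(-1) + int phi Q' = 0; the choice phi = (x + 1) Q' forces Q' = 0, then phi = 1
   forces Q(-1) = 0. Hence |V| <= C max_i |(L V)_i|.

   Subtracting the DG system from the iteration gives L (U_h - U^(k+1)) = -dt/2 (F(U_h) - F(U^k)),
   and F is Lipschitz in the nodal values with an O(1) constant, so each sweep contracts the
   error by a factor O(dt). The explicit Euler start is O(dt^2)-accurate: L maps constant and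
   affine nodal vectors to explicit right-hand sides, which shows that U_h and the Euler iterate
   both agree to O(dt^2) with the linearization u_n + dt/2 f(t_n, u_n) (tau_m + 1). *)

Lemma Deriv_derivable_pt_lim g x l : derivable_pt_lim g x l -> Deriv g x = l.
Proof.
intro H. unfold Deriv.
destruct excluded_middle_informative as [e|n].
- destruct (constructive_indefinite_description _ e) as [l' Hl']; simpl.
  exact (uniqueness_limite _ _ _ _ Hl' H).
- exfalso; apply n; exists l; exact H.
Qed.

Lemma RInt_Riemann g a b : ex_RInt g a b -> Defs.RInt g a b = RInt g a b.
Proof.
intro H. unfold Defs.RInt.
destruct excluded_middle_informative as [e|n].
- symmetry; apply RInt_Reals.
- exfalso; apply n; exists (ex_RInt_Reals_0 _ _ _ H); exact I.
Qed.

Lemma RInt_nonneg_eq0 (g : R -> R) a b :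
  a < b -> (forall x, continuous g x) -> (forall x, a < x < b -> 0 <= g x) ->
  RInt g a b = 0 -> forall x, a < x < b -> g x = 0.
Proof.
intros ab Hc Hp H0 x0 Hx0.
destruct (Req_dec (g x0) 0) as [e|ne]; [exact e|exfalso].
assert (gp : 0 < g x0) by (destruct (Hp x0 Hx0); lra).
destruct (proj2 (continuity_pt_filterlim g x0) (Hc x0) (g x0 / 2)) as [d [dp Hd]]; [lra|].
set (a' := Rmax a (x0 - d/2)). set (b' := Rmin b (x0 + d/2)).
assert (a <= a' < x0 /\ x0 - d/2 <= a') as [Ha' Ha'']
  by (unfold a'; split; [split; [apply Rmax_l | apply Rmax_lub_lt; lra] | apply Rmax_r]).
assert (x0 < b' <= b /\ b' <= x0 + d/2) as [Hb' Hb'']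
  by (unfold b'; split; [split; [apply Rmin_glb_lt; lra | apply Rmin_l] | apply Rmin_r]).
assert (ex : forall u v, ex_RInt g u v)
  by (intros; apply (@ex_RInt_continuous R_CompleteNormedModule); intros; apply Hc).
assert (I1 : 0 <= RInt g a a') by (apply RInt_ge_0; [lra | apply ex | intros; apply Hp; lra]).
assert (I3 : 0 <= RInt g b' b) by (apply RInt_ge_0; [lra | apply ex | intros; apply Hp; lra]).
assert (I2 : RInt (fun _ => g x0 / 2) a' b' < RInt g a' b').
{ apply RInt_lt; [lra | intros; apply Hc | intros; apply continuous_const | ].
  intros x Hx.
  assert (Rabs (g x - g x0) < g x0 / 2).
  { destruct (Req_dec x x0) as [->|nx]; [rewrite Rminus_diag, Rabs_R0; lra|].
    apply (Hd x); split; [split; [exact I | auto] | simpl; unfold R_dist; apply Rabs_def1; lra]. }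
  apply Rabs_def2 in H; lra. }
rewrite RInt_const in I2; unfold scal in I2; simpl in I2; unfold mult in I2; simpl in I2.
assert (0 < (b' - a') * (g x0 / 2)) by (apply Rmult_lt_0_compat; lra).
rewrite <- (RInt_Chasles g a a' b), <- (RInt_Chasles g a' b' b) in H0 by auto.
unfold plus in H0; simpl in H0. lra.
Qed.

Lemma Lmul_ext p tau V W i : (forall m, (m <= p)%nat -> V m = W m) ->
  Lmul p tau V i = Lmul p tau W i.
Proof. intros H; apply sum_eq; intros k kp; rewrite H by exact kp; reflexivity. Qed.

Lemma Lmul_minus p tau V W i :
  Lmul p tau (fun m => V m - W m) i = Lmul p tau V i - Lmul p tau W i.
Proof. unfold Lmul; rewrite <- minus_sum; apply sum_eq; intros; ring. Qed.

Module LagrangeBasis.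
Import all_boot all_algebra Rstruct GRing.Theory.

Lemma sum_f_R0_big g n : sum_f_R0 g n = (\sum_(i < n.+1) g i)%R.
Proof.
elim: n => [|n IH]; first by rewrite big_ord_recr big_ord0 /= add0r.
by rewrite big_ord_recr /= -IH.
Qed.

Lemma prodR_big n g : prodR n g = (\prod_(j < n) g j)%R.
Proof.
elim: n => [|n IH]; first by rewrite big_ord0.
by rewrite big_ord_recr /= IH.
Qed.

Lemma is_derive_horner (P : {poly R}) x : is_derive (horner P) x (P^`().[x])%R.
Proof.
elim/poly_ind: P => [|P c IH].
  rewrite deriv0 horner0.
  apply: (is_derive_ext (fun _ => 0)); first by move=> t; rewrite horner0.
  exact: is_derive_const.
rewrite derivMXaddC.
apply: (is_derive_ext (fun y => (P.[y])%R * y + c)); first by move=> t; rewrite hornerMXaddC.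
have -> : ((P + P^`() * 'X).[x])%R = (P^`().[x])%R * x + (P.[x])%R * 1 + 0.
  by rewrite hornerD hornerMX Rmult_1_r Rplus_0_r RplusE RmultE addrC.
apply: is_derive_plus; last exact: is_derive_const.
apply: (is_derive_mult (horner P) id) => //; first exact: is_derive_id.
by move=> a b; apply: Rmult_comm.
Qed.

Lemma continuous_horner (P : {poly R}) x : continuous (horner P) x.
Proof. apply: ex_derive_continuous; eexists; exact: is_derive_horner. Qed.

Lemma ex_RInt_horner (P : {poly R}) a b : ex_RInt (horner P) a b.
Proof. by apply: ex_RInt_continuous => z _; apply: continuous_horner. Qed.

Definition int_poly (P : {poly R}) : R := RInt (horner P) (-1) 1.

Lemma int_polyD P Q : int_poly (P + Q)%R = int_poly P + int_poly Q.
Proof.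
rewrite /int_poly (RInt_ext _ (fun x => plus (P.[x])%R (Q.[x])%R)); last by move=> x _; rewrite hornerD.
by rewrite RInt_plus //; apply: ex_RInt_horner.
Qed.

Lemma int_polyZ c P : int_poly (c *: P)%R = c * int_poly P.
Proof.
rewrite /int_poly (RInt_ext _ (fun x => scal c (P.[x])%R)); last by move=> x _; rewrite hornerZ.
by rewrite RInt_scal //; apply: ex_RInt_horner.
Qed.

Lemma int_polyC c : int_poly c%:P = 2 * c.
Proof.
rewrite /int_poly (RInt_ext _ (fun _ => c)); last by move=> x _; rewrite hornerC.
by rewrite RInt_const /scal /= /mult /=; ring.
Qed.

Lemma int_poly_sum n (F : 'I_n -> {poly R}) :
  int_poly (\sum_(k < n) F k)%R = (\sum_(k < n) int_poly (F k))%R.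
Proof.
elim: n F => [|n IH] F; first by rewrite !big_ord0 int_polyC Rmult_0_r.
by rewrite big_ord_recr int_polyD IH big_ord_recr.
Qed.

Lemma RInt_horner_deriv P a b : RInt (horner P^`()) a b = horner P b - horner P a.
Proof.
apply: is_RInt_unique; apply: (is_RInt_derive (horner P)) => x _.
  exact: is_derive_horner.
exact: continuous_horner.
Qed.

Lemma int_poly_deriv P : int_poly P^`() = horner P 1 - horner P (-1).
Proof. exact: RInt_horner_deriv. Qed.

Lemma int_poly_by_parts P Q :
  int_poly (P^`() * Q) = horner P 1 * horner Q 1 - horner P (-1) * horner Q (-1)
                         - int_poly (P * Q^`()).
Proof. by rewrite !RmultE -!hornerM -int_poly_deriv derivM int_polyD; ring. Qed.

Section Lagrange.
Variable p : nat.
Variable tau : nat -> R.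
Hypothesis tau_inj : forall i j, (i <= p)%N -> (j <= p)%N -> tau i = tau j -> i = j.

Definition lagr_factor (i j : nat) : {poly R} :=
  if j == i then 1%R else (('X - (tau j)%:P) * ((tau i - tau j)^-1)%:P)%R.

Definition lagr_poly (i : nat) : {poly R} := (\prod_(j < p.+1) lagr_factor i j)%R.

Lemma lagr_horner i : lagr p tau i = horner (lagr_poly i).
Proof.
apply: functional_extensionality => x.
rewrite /lagr prodR_big /lagr_poly horner_prod.
apply: eq_bigr => j _; rewrite /lagr_factor.
case: Nat.eq_dec => [->|ne]; first by rewrite eqxx hornerE.
by rewrite ifF ?hornerE //; apply/eqP.
Qed.

Lemma size_lagr_factor i j : (size (lagr_factor i j) <= 2)%N.
Proof.
rewrite /lagr_factor; case: eqP => _; first by rewrite size_poly1.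
rewrite (leq_trans (size_polyMleq _ _)) // size_XsubC.
by case: (size _) (size_polyC_leq1 (tau i - tau j)^-1) => [|[|]].
Qed.

Lemma size_lagr_poly i : (i <= p)%N -> (size (lagr_poly i) <= p.+1)%N.
Proof.
move=> ip; pose i' := Ordinal (ip : (i < p.+1)%N).
rewrite /lagr_poly (bigD1 i') //=.
have -> : lagr_factor i i' = 1%R by rewrite /lagr_factor eqxx.
rewrite mul1r (leq_trans (size_poly_prod_leq _ _)) //.
have card : #|(fun j : 'I_p.+1 => j != i')| = p by have := cardC1 i'; rewrite card_ord.
have sum2 : (\sum_(j | j != i') size (lagr_factor i j) <= #|(fun j : 'I_p.+1 => j != i')| * 2)%N.
  by rewrite -sum1_card big_distrl leq_sum // => j _; exact: size_lagr_factor.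
move: sum2; rewrite card => sum2.
by rewrite leq_subLR addnS ltnS addnn -muln2.
Qed.

Lemma lagr_poly_node i j : (i <= p)%N -> (j <= p)%N ->
  ((lagr_poly i).[tau j])%R = if i == j then 1%R else 0%R.
Proof.
move=> ip jp; rewrite /lagr_poly horner_prod.
case: eqP => [<-|ne].
  apply: big1 => k _; rewrite /lagr_factor.
  case: eqP => [_|nk]; first by rewrite hornerE.
  rewrite !hornerE mulfV //; apply/eqP => /subr0_eq eq_tau.
  by apply: nk; apply: tau_inj; rewrite // -ltnS.
rewrite (bigD1 (Ordinal (jp : (j < p.+1)%N))) //= /lagr_factor ifF; last by apply/eqP => ji; apply: ne.
by rewrite !hornerE subrr !mul0r.
Qed.

Definition interp_poly (V : nat -> R) : {poly R} := (\sum_(m < p.+1) V m *: lagr_poly m)%R.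

Lemma size_interp_poly V : (size (interp_poly V) <= p.+1)%N.
Proof.
apply: (leq_trans (size_sum _ _ _)); apply/bigmax_leqP => k _.
by rewrite (leq_trans (size_scale_leq _ _)) // size_lagr_poly // -ltnS.
Qed.

Lemma interp_poly_node V j : (j <= p)%N -> ((interp_poly V).[tau j])%R = V j.
Proof.
move=> jp; rewrite /interp_poly horner_sum (bigD1 (Ordinal (jp : (j < p.+1)%N))) //=.
rewrite hornerZ lagr_poly_node // eqxx mulr1 big1 ?addr0 // => k /eqP nk.
have kp : (k <= p)%N by rewrite -ltnS.
rewrite hornerZ lagr_poly_node // ifF ?mulr0 //.
by apply/eqP => kj; apply: nk; apply: val_inj.
Qed.

Lemma lagrange_interpolation (P : {poly R}) :
  (size P <= p.+1)%N -> P = interp_poly (fun m => (P.[tau m])%R).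
Proof.
move=> sP; apply/eqP; rewrite -subr_eq0; apply/eqP.
set D := (P - _)%R.
have sD : (size D <= p.+1)%N.
  by rewrite (leq_trans (size_polyD _ _)) // geq_max sP size_polyN size_interp_poly.
apply/eqP; apply: contraT => nD.
have := max_poly_roots nD (rs := [seq tau i | i <- iota 0 p.+1]).
rewrite size_map size_iota.
have -> : all (root D) [seq tau i | i <- iota 0 p.+1].
  apply/allP => x /mapP [j]; rewrite mem_iota add0n => /andP [_ jp] ->.
  by rewrite rootE /D hornerD hornerN interp_poly_node ?subrr // -ltnS.
have -> : uniq [seq tau i | i <- iota 0 p.+1].
  rewrite map_inj_in_uniq ?iota_uniq // => a b.
  by rewrite !mem_iota !add0n => /andP [_ ha] /andP [_ hb]; apply: tau_inj; rewrite -ltnS.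
by move=> /(_ isT isT) /(leq_ltn_trans sD); rewrite ltnn.
Qed.

Lemma Lmat_int_poly i j : Lmat p tau i j =
  int_poly ((lagr_poly i)^`() * lagr_poly j) - (if (i == p) && (j == p) then 1 else 0).
Proof.
rewrite /Lmat; congr (_ - _); last first.
  case: (Nat.eq_dec i p) => [->|/(introF eqP) ->];
    by case: (Nat.eq_dec j p) => [->|/(introF eqP) ->]; rewrite ?eqxx ?andbF.
rewrite !lagr_horner (_ : (fun x => _) = horner ((lagr_poly i)^`() * lagr_poly j)).
  by rewrite RInt_Riemann //; apply: ex_RInt_horner.
apply: functional_extensionality => x.
have dP := proj1 (is_derive_Reals _ _ _) (is_derive_horner (lagr_poly i) x).
by rewrite hornerM (Deriv_derivable_pt_lim _ _ _ dP).
Qed.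

Lemma Lmul_int_poly V i : (i <= p)%N ->
  Lmul p tau V i = int_poly ((lagr_poly i)^`() * interp_poly V) - (if i == p then V p else 0).
Proof.
move=> ip; rewrite /Lmul sum_f_R0_big.
under eq_bigr do rewrite Lmat_int_poly RmultE RminusE mulrBl.
rewrite sumrB RminusE /interp_poly mulr_sumr int_poly_sum; congr (_ - _).
  by apply: eq_bigr => j _; rewrite -scalerAr int_polyZ RmultE mulrC.
case: (eqVneq i p) => [_|_] /=; last by rewrite big1 // => j _; rewrite mul0r.
rewrite (bigD1 ord_max) //= eqxx mul1r big1 ?addr0 // => j nj.
by rewrite ifF ?mul0r //; apply/negbTE; move: nj; rewrite -val_eqE.
Qed.

Hypothesis tau_last : tau p = 1.
Hypothesis tau_range : forall m, (m <= p)%N -> -1 < tau m <= 1.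

Lemma lagr_poly_at1 i : (i <= p)%N -> horner (lagr_poly i) 1 = if i == p then 1 else 0.
Proof. by move=> ip; have := lagr_poly_node _ _ ip (leqnn p); rewrite tau_last. Qed.

Lemma interp_poly_at1 V : horner (interp_poly V) 1 = V p.
Proof. by have := interp_poly_node V _ (leqnn p); rewrite tau_last. Qed.

Lemma Lmul_by_parts V i : (i <= p)%N ->
  Lmul p tau V i = - (horner (lagr_poly i) (-1) * horner (interp_poly V) (-1))
                   - int_poly (lagr_poly i * (interp_poly V)^`()).
Proof.
move=> ip; rewrite Lmul_int_poly // int_poly_by_parts lagr_poly_at1 // interp_poly_at1.
by case: eqP => _; ring.
Qed.

Lemma sum_nodes_Lmul (phi : {poly R}) V : (size phi <= p.+1)%N ->
  (\sum_(i < p.+1) horner phi (tau i) * Lmul p tau V i)%R =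
  - (horner phi (-1) * horner (interp_poly V) (-1)) - int_poly (phi * (interp_poly V)^`()).
Proof.
move=> sphi; set Q := interp_poly V; set a := horner Q (-1).
transitivity (\sum_(i < p.+1) horner phi (tau i) *
              (- (horner (lagr_poly i) (-1) * a) - int_poly (lagr_poly i * Q^`())))%R.
  by apply: eq_bigr => i _; rewrite (Lmul_by_parts V _ (ltn_ord i)).
rewrite {2 3}(lagrange_interpolation _ sphi) /interp_poly horner_sum mulr_suml int_poly_sum.
rewrite ?RmultE ?RoppE ?RminusE big_distrl -sumrN -sumrB; apply: eq_bigr => i _ /=.
by rewrite hornerZ -scalerAl int_polyZ mulrBr mulrN mulrA.
Qed.

Lemma Lmul_eq0 V : (forall i, (i <= p)%N -> Lmul p tau V i = 0) ->
  forall m, (m <= p)%N -> V m = 0.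
Proof.
move=> LV0; set Q := interp_poly V.
have orth (phi : {poly R}) : (size phi <= p.+1)%N ->
    horner phi (-1) * horner Q (-1) + int_poly (phi * Q^`())%R = 0.
  move=> sphi; have := sum_nodes_Lmul _ V sphi.
  rewrite big1 => [|i _]; last by rewrite LV0 ?mulr0 // -ltnS.
  by rewrite -R0E -/Q => h; lra.
have sQ' : (size Q^`()%R <= p)%N.
  have sQ : (size Q <= p.+1)%N := size_interp_poly V.
  case: (eqVneq Q 0%R) => [->|nQ]; first by rewrite deriv0 size_poly0.
  by rewrite -ltnS (leq_trans (lt_size_deriv nQ)).
have Q'0 x : -1 < x < 1 -> horner Q^`()%R x = 0.
  move=> Hx; set phi := (('X + 1%:P) * Q^`())%R.
  have phiE y : horner (phi * Q^`())%R y = (y + 1) * (horner Q^`()%R y * horner Q^`()%R y).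
    by rewrite /phi !hornerM hornerD hornerX hornerC !RmultE mulrA.
  have int0 : int_poly (phi * Q^`())%R = 0.
    have := orth phi; rewrite /phi hornerM hornerD hornerX hornerC.
    rewrite (leq_trans (size_polyMleq _ _)) ?size_XaddC // => /(_ isT).
    by rewrite -RmultE -RplusE -R1E -RoppE => h; lra.
  have nonneg y : -1 < y < 1 -> 0 <= horner (phi * Q^`())%R y.
    by move=> Hy; rewrite phiE; apply: Rmult_le_pos; [lra | apply: Rle_0_sqr].
  have := RInt_nonneg_eq0 _ (-1) 1 ltac:(lra) (continuous_horner _) nonneg int0 x Hx.
  by rewrite phiE => /Rmult_integral [|/Rmult_integral []] //; lra.
have Qconst a : -1 <= a <= 1 -> horner Q a = horner Q (-1).
  move=> Ha; have := RInt_horner_deriv Q (-1) a.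
  rewrite (RInt_ext _ (fun _ => 0)) => [|y]; last first.
    by rewrite Rmin_left ?Rmax_right; try lra; move=> Hy; apply: Q'0; lra.
  by rewrite RInt_const /scal /= /mult /= Rmult_0_r => /esym /Rminus_diag_uniq.
have Qm1 : horner Q (-1) = 0.
  have := orth 1%R; rewrite size_poly1 mul1r int_poly_deriv (Qconst 1) ?hornerC; last lra.
  by rewrite -R1E => /(_ isT); lra.
move=> m mp; have := tau_range _ mp.
by rewrite -(interp_poly_node V m mp) -/Q => Hm; rewrite Qconst ?Qm1 //; lra.
Qed.

Lemma interp_poly_eq (P : {poly R}) V : (size P <= p.+1)%N ->
  (forall m, (m <= p)%N -> V m = horner P (tau m)) -> interp_poly V = P.
Proof.
move=> sP PV; rewrite [RHS](lagrange_interpolation _ sP).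
by apply: eq_bigr => m _; rewrite PV // -ltnS.
Qed.

Lemma lagr_sum1 x : sum_f_R0 (fun m => lagr p tau m x) p = 1.
Proof.
have := interp_poly_eq 1%:P (fun _ => 1) (leq_trans (size_polyC_leq1 _) (ltn0Sn p))
                       (fun m _ => esym (hornerC 1 (tau m))).
move=> /(congr1 (horner^~ x)); rewrite hornerC horner_sum => /(etrans _); apply.
by rewrite sum_f_R0_big; apply: eq_bigr => m _; rewrite hornerZ mul1r lagr_horner.
Qed.

Lemma Lmul_const c i : (i <= p)%N -> Lmul p tau (fun _ => c) i = - c * lagr p tau i (-1).
Proof.
move=> ip; have Qc := interp_poly_eq c%:P (fun _ => c) (leq_trans (size_polyC_leq1 _) (ltn0Sn p))
                                    (fun m _ => esym (hornerC c (tau m))).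
rewrite Lmul_by_parts // Qc derivC mulr0 int_polyC hornerC lagr_horner -R0E.
by rewrite Rmult_0_r Rminus_0_r Rmult_comm Ropp_mult_distr_l.
Qed.

Lemma Lmul_affine c i : (i <= p)%N ->
  Lmul p tau (fun m => c * (tau m + 1)) i = - c * Defs.RInt (lagr p tau i) (-1) 1.
Proof.
move=> ip; rewrite lagr_horner RInt_Riemann -/(int_poly _); last exact: ex_RInt_horner.
case: (posnP p) => [p0|p_gt0].
  have -> : i = 0%N by apply/eqP; rewrite -leqn0 -p0.
  have l0 : lagr_poly 0 = 1%R by rewrite /lagr_poly p0 big_ord1 /lagr_factor.
  rewrite (Lmul_ext _ _ _ (fun _ => 2 * c)) => [|m]; last first.
    by move=> /leP; rewrite p0 leqn0 => /eqP ->; rewrite -p0 tau_last; ring.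
  by rewrite Lmul_const // lagr_horner l0 -polyC1 int_polyC hornerC -R1E; ring.
have sP : (size (c *: ('X + 1%:P))%R <= p.+1)%N.
  by rewrite (leq_trans (size_scale_leq _ _)) // size_XaddC.
rewrite Lmul_by_parts // (interp_poly_eq _ _ sP) => [|m _]; last first.
  by rewrite hornerZ hornerD hornerX hornerC.
rewrite hornerZ hornerD hornerX hornerC derivZ derivD derivX derivC addr0 -scalerAr int_polyZ mulr1.
by rewrite -!RmultE -RplusE -?R1E -?RoppE; ring.
Qed.
End Lagrange.

Lemma injective_left_inverse n (M : nat -> nat -> R) :
  (forall V : nat -> R, (forall i, (i <= n)%coq_nat -> sum_f_R0 (fun j => M i j * V j) n = 0) ->
     forall j, (j <= n)%coq_nat -> V j = 0) ->
  exists B : nat -> nat -> R, forall V j, (j <= n)%coq_nat ->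
    V j = sum_f_R0 (fun i => B j i * sum_f_R0 (fun k => M i k * V k) n) n.
Proof.
move=> Minj; pose A : 'M[R]_(n.+1) := (\matrix_(i, j) M i j)%R.
have uA : A \in unitmx.
  rewrite -unitmx_tr -row_free_unit; apply: inj_row_free => w wA0.
  apply/matrixP => a b; rewrite mxE (ord1 a) -(inord_val b).
  apply: (Minj (fun j => w ord0 (inord j))); last by apply/leP; rewrite -ltnS.
  move=> i /leP ip; rewrite sum_f_R0_big.
  have := congr1 (fun m : 'M[R]_(1, n.+1) => m ord0 (inord i)) wA0; rewrite !mxE; apply: etrans.
  by apply: eq_bigr => k _; rewrite !mxE inord_val inordK // mulrC.
exists (fun j i => invmx A (inord j) (inord i)) => V j /leP jn.
pose v : 'cV[R]_(n.+1) := (\col_k V k)%R.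
have := congr1 (fun m : 'cV[R]_(n.+1) => m (inord j) ord0) (mulKmx uA v).
rewrite /= !mxE inordK // => <-.
rewrite sum_f_R0_big; apply: eq_bigr => i _; rewrite !mxE inord_val sum_f_R0_big.
by congr (_ * _); apply: eq_bigr => k _; rewrite !mxE.
Qed.
End LagrangeBasis.

Definition vnorm (p : nat) (V : nat -> R) := sum_f_R0 (fun m => Rabs (V m)) p.

Lemma vnorm_ge0 p V : 0 <= vnorm p V.
Proof. apply cond_pos_sum; intros; apply Rabs_pos. Qed.

Lemma vnorm_ge_abs p V m : (m <= p)%nat -> Rabs (V m) <= vnorm p V.
Proof.
unfold vnorm; induction p as [|p IH]; intros mp; simpl.
- replace m with 0%nat by lia; lra.
- pose proof (Rabs_pos (V (S p))). pose proof (vnorm_ge0 p V); unfold vnorm in *.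
  destruct (Nat.eq_dec m (S p)) as [->|ne]; [lra|].
  specialize (IH ltac:(lia)); lra.
Qed.

Lemma vnorm_triangle p V W X :
  vnorm p (fun m => V m - W m) <= vnorm p (fun m => V m - X m) + vnorm p (fun m => X m - W m).
Proof.
unfold vnorm; rewrite <- plus_sum; apply sum_Rle; intros k _.
replace (V k - W k) with ((V k - X k) + (X k - W k)) by ring; apply Rabs_triang.
Qed.

Section IncreasingNodes.
Variables (p : nat) (tau : nat -> R).
Hypothesis tau_incr : forall m, (m < p)%nat -> tau m < tau (S m).
Hypothesis tau_first : -1 < tau O.
Hypothesis tau_last : tau p = 1.

Lemma tau_le m k : (m <= k)%nat -> (k <= p)%nat -> tau m <= tau k.
Proof.
intros mk kp; induction mk as [|k mk IH]; [lra|].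
pose proof (tau_incr k ltac:(lia)); specialize (IH ltac:(lia)); lra.
Qed.

Lemma tau_range m : (m <= p)%nat -> -1 < tau m <= 1.
Proof. intros mp; pose proof (tau_le 0 m ltac:(lia) mp); pose proof (tau_le m p mp ltac:(lia)); lra. Qed.

Let tau_inj i j : is_true (ssrnat.leq i p) -> is_true (ssrnat.leq j p) -> tau i = tau j -> i = j.
Proof.
intros ip%(ssrbool.elimT ssrnat.leP) jp%(ssrbool.elimT ssrnat.leP) e.
destruct (Nat.lt_trichotomy i j) as [h|[h|h]]; auto; exfalso.
- pose proof (tau_incr i ltac:(lia)); pose proof (tau_le (S i) j ltac:(lia) jp); lra.
- pose proof (tau_incr j ltac:(lia)); pose proof (tau_le (S j) i ltac:(lia) ip); lra.
Qed.

Lemma lagr_sum1 x : sum_f_R0 (fun m => lagr p tau m x) p = 1.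
Proof. exact (LagrangeBasis.lagr_sum1 p tau tau_inj x). Qed.

Lemma Lmul_const c i : (i <= p)%nat -> Lmul p tau (fun _ => c) i = - c * lagr p tau i (-1).
Proof.
intros ip; exact (LagrangeBasis.Lmul_const p tau tau_inj tau_last c i (ssrbool.introT ssrnat.leP ip)).
Qed.

Lemma Lmul_affine c i : (i <= p)%nat ->
  Lmul p tau (fun m => c * (tau m + 1)) i = - c * Defs.RInt (lagr p tau i) (-1) 1.
Proof.
intros ip; exact (LagrangeBasis.Lmul_affine p tau tau_inj tau_last c i (ssrbool.introT ssrnat.leP ip)).
Qed.

(* L is injective, so it has a left inverse B; the bound is the l1 operator norm of B. *)
Lemma Lmul_bound : exists CL, 0 < CL /\ forall V beta,
  (forall i, (i <= p)%nat -> Rabs (Lmul p tau V i) <= beta) -> vnorm p V <= CL * beta.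
Proof.
assert (Linj : forall V : nat -> R, (forall i, (i <= p)%nat -> Lmul p tau V i = 0) ->
          forall j, (j <= p)%nat -> V j = 0).
{ intros V LV0 j jp.
  refine (LagrangeBasis.Lmul_eq0 p tau tau_inj tau_last _ V _ j (ssrbool.introT ssrnat.leP jp)).
  - intros m mp%(ssrbool.elimT ssrnat.leP); apply tau_range, mp.
  - intros i ip%(ssrbool.elimT ssrnat.leP); apply LV0, ip. }
destruct (LagrangeBasis.injective_left_inverse p (Lmat p tau) Linj) as [B HB].
set (CB := sum_f_R0 (fun j => sum_f_R0 (fun i => Rabs (B j i)) p) p).
assert (CB0 : 0 <= CB) by (apply cond_pos_sum; intros; apply cond_pos_sum; intros; apply Rabs_pos).
exists (CB + 1); split; [lra|].
intros V beta Hb.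
assert (beta0 : 0 <= beta) by (pose proof (Hb 0%nat ltac:(lia)); pose proof (Rabs_pos (Lmul p tau V 0)); lra).
apply Rle_trans with (CB * beta); [| nra].
unfold CB, vnorm; rewrite Rmult_comm, scal_sum; apply sum_Rle; intros j jp.
rewrite (HB V j jp); eapply Rle_trans; [apply sum_f_R0_triangle|].
rewrite Rmult_comm, scal_sum; apply sum_Rle; intros i ip.
rewrite Rabs_mult; apply Rmult_le_compat_l; [apply Rabs_pos | apply Hb, ip].
Qed.

End IncreasingNodes.

Lemma continuous_bounded (g : R -> R) a b : (forall x, a <= x <= b -> continuity_pt g x) ->
  exists M, forall x, a <= x <= b -> Rabs (g x) <= M.
Proof.
intros Hg; destruct (bounded_continuity (V := R_NormedModule) g a b) as [M HM].
- intros x Hx; apply continuity_pt_filterlim, Hg, Hx.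
- exists M; intros x Hx; apply Rlt_le, (HM x Hx).
Qed.

Lemma continuous2_continuity_2d_pt g t x : continuous2 g -> continuity_2d_pt g t x.
Proof.
intros Hg eps; destruct (Hg t x eps (cond_pos eps)) as [d [dp Hd]].
exists (mkposreal d dp); intros s y hs hy; apply Hd; assumption.
Qed.

Lemma continuous2_comp (g : R -> R -> R) (a b : R -> R) x :
  continuous2 g -> continuity_pt a x -> continuity_pt b x ->
  continuity_pt (fun y => g (a y) (b y)) x.
Proof.
intros Hg Ha Hb eps ep.
destruct (Hg (a x) (b x) eps ep) as [d [dp Hd]].
destruct (Ha d dp) as [da [dap Hda]]; destruct (Hb d dp) as [db [dbp Hdb]].
exists (Rmin da db); split; [apply Rmin_glb_lt; assumption|].
intros y [Dy hy]; simpl in *; unfold R_dist in *; apply Hd.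
- destruct (Req_dec y x) as [->|ne]; [rewrite Rminus_diag, Rabs_R0; exact dp|].
  apply Hda; split; [exact Dy|]; eapply Rlt_le_trans; [exact hy | apply Rmin_l].
- destruct (Req_dec y x) as [->|ne]; [rewrite Rminus_diag, Rabs_R0; exact dp|].
  apply Hdb; split; [exact Dy|]; eapply Rlt_le_trans; [exact hy | apply Rmin_r].
Qed.

(* Walk from t = a in steps of half the uniform-continuity modulus, gaining at most 1 per step. *)
Lemma continuous2_bounded (g : R -> R -> R) a b c d : continuous2 g ->
  exists M, forall t y, a <= t <= b -> c <= y <= d -> Rabs (g t y) <= M.
Proof.
intros Hg.
destruct (uniform_continuity_2d g a b c d (fun t y _ _ => continuous2_continuity_2d_pt g t y Hg)
            (mkposreal 1 Rlt_0_1)) as [[dl dlp] Hdl]; simpl in Hdl.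
destruct (continuous_bounded (fun y => g a y) c d) as [Ma HMa].
{ intros y _; apply (continuous2_comp g (fun _ => a) (fun y => y) y Hg);
    [apply continuity_pt_const; intros ? ?; reflexivity | apply continuity_pt_id]. }
assert (walk : forall n : nat, forall t y, a <= t <= b -> c <= y <= d ->
          t <= a + INR n * (dl / 2) -> Rabs (g t y) <= Ma + INR n).
{ induction n as [|n IH]; intros t y ht hy htn; rewrite ?S_INR in *; simpl in htn.
  - replace t with a by lra; simpl; pose proof (HMa y hy); lra.
  - pose proof (pos_INR n).
    destruct (Rle_dec (t - dl / 2) a) as [h|h].
    + assert (Rabs (g t y - g a y) < 1) by (apply Hdl; try lra; [apply Rabs_def1 | rewrite Rminus_diag, Rabs_R0]; lra).
      pose proof (Rabs_triang_inv (g t y) (g a y)); pose proof (HMa y hy); lra.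
    + assert (Rabs (g t y - g (t - dl / 2) y) < 1)
        by (apply Hdl; try lra; [apply Rabs_def1 | rewrite Rminus_diag, Rabs_R0]; lra).
      pose proof (IH (t - dl / 2) y ltac:(lra) hy ltac:(lra)).
      pose proof (Rabs_triang_inv (g t y) (g (t - dl / 2) y)); lra. }
destruct (nfloor_ex (Rmax 0 ((b - a) / (dl / 2))) (Rmax_l _ _)) as [n [_ hn]].
exists (Ma + INR (S n)); intros t y ht hy; apply walk; try assumption.
rewrite S_INR.
assert ((b - a) / (dl / 2) <= Rmax 0 ((b - a) / (dl / 2))) by apply Rmax_r.
assert ((b - a) / (dl / 2) * (dl / 2) = b - a) by (field; lra).
assert ((b - a) / (dl / 2) * (dl / 2) <= (INR n + 1) * (dl / 2)) by (apply Rmult_le_compat_r; lra).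
lra.
Qed.

Lemma lagr_continuity p tau i x : continuity_pt (lagr p tau i) x.
Proof.
apply continuity_pt_filterlim; rewrite (LagrangeBasis.lagr_horner p tau i).
apply LagrangeBasis.continuous_horner.
Qed.

Definition lagr_interp (p : nat) (tau : nat -> R) (V : nat -> R) (x : R) :=
  sum_f_R0 (fun m => V m * lagr p tau m x) p.

Lemma lagr_interp_continuity p tau V x : continuity_pt (lagr_interp p tau V) x.
Proof.
apply (continuity_pt_finite_SF (fun m y => V m * lagr p tau m y)); intros m _.
apply continuity_pt_scal, lagr_continuity.
Qed.

Section NonlinearTerm.
Variables (p : nat) (tau : nat -> R) (f : R -> R -> R).
Hypothesis f_cont : continuous2 f.
Variable Lf : R.
Hypothesis Lf_ge0 : 0 <= Lf.
Hypothesis f_lip : forall t x y, Rabs (f t x - f t y) <= Lf * Rabs (x - y).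
Variable Lam : R.
Hypothesis lagr_le : forall m x, (m <= p)%nat -> -1 <= x <= 1 -> Rabs (lagr p tau m x) <= Lam.

Lemma Lam_ge0 : 0 <= Lam.
Proof. pose proof (lagr_le 0 0 ltac:(lia) ltac:(lra)); pose proof (Rabs_pos (lagr p tau 0 0)); lra. Qed.

Definition Fintegrand tn dt V j x :=
  f (tn + (x + 1) * dt / 2) (lagr_interp p tau V x) * lagr p tau j x.

Lemma ex_RInt_Fintegrand tn dt V j : ex_RInt (Fintegrand tn dt V j) (-1) 1.
Proof.
apply (@ex_RInt_continuous R_CompleteNormedModule); intros x _.
apply continuity_pt_filterlim, continuity_pt_mult; [|apply lagr_continuity].
apply continuous2_comp; [exact f_cont | | apply lagr_interp_continuity].
apply derivable_continuous_pt; reg.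
Qed.

Lemma Fvec_RInt tn dt V j : Fvec p tau f tn dt V j = RInt (Fintegrand tn dt V j) (-1) 1.
Proof. apply RInt_Riemann, ex_RInt_Fintegrand. Qed.

Lemma lagr_interp_lipschitz V W x : -1 <= x <= 1 ->
  Rabs (lagr_interp p tau V x - lagr_interp p tau W x) <= Lam * vnorm p (fun m => V m - W m).
Proof.
intros hx; unfold lagr_interp, vnorm; rewrite <- minus_sum.
eapply Rle_trans; [apply sum_f_R0_triangle|].
rewrite scal_sum; apply sum_Rle; intros k kp.
replace (V k * lagr p tau k x - W k * lagr p tau k x) with ((V k - W k) * lagr p tau k x) by ring.
rewrite Rabs_mult; apply Rmult_le_compat_l; [apply Rabs_pos | apply lagr_le; assumption].
Qed.

Lemma ex_RInt_lagr j : ex_RInt (lagr p tau j) (-1) 1.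
Proof.
apply (@ex_RInt_continuous R_CompleteNormedModule); intros z _.
apply continuity_pt_filterlim, lagr_continuity.
Qed.

Lemma RInt_lagr_bound j : (j <= p)%nat -> Rabs (Defs.RInt (lagr p tau j) (-1) 1) <= 2 * Lam.
Proof.
intros jp; rewrite RInt_Riemann by apply ex_RInt_lagr.
replace 2 with (1 - -1) by ring.
apply abs_RInt_le_const; [lra | apply ex_RInt_lagr | intros; apply lagr_le; auto].
Qed.

Lemma Fvec_approx tn dt V j (h : R -> R) e : (j <= p)%nat ->
  ex_RInt (fun x => h x * lagr p tau j x) (-1) 1 ->
  (forall x, -1 <= x <= 1 -> Rabs (f (tn + (x + 1) * dt / 2) (lagr_interp p tau V x) - h x) <= e) ->
  Rabs (Fvec p tau f tn dt V j - RInt (fun x => h x * lagr p tau j x) (-1) 1) <= 2 * (e * Lam).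
Proof.
intros jp exh He; rewrite Fvec_RInt.
assert (ex : ex_RInt (fun x => (f (tn + (x + 1) * dt / 2) (lagr_interp p tau V x) - h x)
                               * lagr p tau j x) (-1) 1).
{ apply (ex_RInt_ext (fun x => minus (Fintegrand tn dt V j x) (h x * lagr p tau j x))).
  - intros x _; unfold Fintegrand, minus, plus, opp; simpl; ring.
  - apply (ex_RInt_minus (V := R_CompleteNormedModule)); [apply ex_RInt_Fintegrand | exact exh]. }
replace (RInt (Fintegrand tn dt V j) (-1) 1 - RInt (fun x => h x * lagr p tau j x) (-1) 1)
  with (RInt (fun x => (f (tn + (x + 1) * dt / 2) (lagr_interp p tau V x) - h x) * lagr p tau j x) (-1) 1).
2:{ rewrite <- (RInt_minus (V := R_CompleteNormedModule)); [| apply ex_RInt_Fintegrand | exact exh].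
    apply RInt_ext; intros x _; unfold Fintegrand, minus, plus, opp; simpl; ring. }
apply Rle_trans with ((1 - -1) * (e * Lam)); [| lra].
apply abs_RInt_le_const; [lra | exact ex |].
intros x hx.
rewrite Rabs_mult; apply Rmult_le_compat; try apply Rabs_pos; [apply He | apply lagr_le]; auto.
Qed.

Lemma Fvec_lipschitz tn dt V W j : (j <= p)%nat ->
  Rabs (Fvec p tau f tn dt V j - Fvec p tau f tn dt W j)
    <= 2 * (Lf * Lam * vnorm p (fun m => V m - W m) * Lam).
Proof.
intros jp; rewrite (Fvec_RInt tn dt W); unfold Fintegrand.
apply Fvec_approx; [assumption | apply ex_RInt_Fintegrand |].
intros x hx; eapply Rle_trans; [apply f_lip|].
rewrite Rmult_assoc; apply Rmult_le_compat_l; [assumption | apply lagr_interp_lipschitz, hx].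
Qed.

Hypothesis lagr_sum1 : forall x, sum_f_R0 (fun m => lagr p tau m x) p = 1.

Lemma lagr_interp_const c x : lagr_interp p tau (fun _ => c) x = c.
Proof.
unfold lagr_interp; rewrite (sum_eq _ (fun m => lagr p tau m x * c)) by (intros; ring).
rewrite <- scal_sum, lagr_sum1; ring.
Qed.

Lemma Fvec_near_const tn dt V c E j : (j <= p)%nat ->
  (forall x, -1 <= x <= 1 -> Rabs (f (tn + (x + 1) * dt / 2) c - f tn c) <= E) ->
  Rabs (Fvec p tau f tn dt V j - f tn c * Defs.RInt (lagr p tau j) (-1) 1)
    <= 2 * ((Lf * Lam * vnorm p (fun m => V m - c) + E) * Lam).
Proof.
intros jp HE.
rewrite RInt_Riemann, <- (RInt_scal (V := R_CompleteNormedModule)) by apply ex_RInt_lagr.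
apply (Fvec_approx tn dt V j (fun _ => f tn c)); [assumption| |].
{ apply (ex_RInt_scal (V := R_CompleteNormedModule)), ex_RInt_lagr. }
intros x hx.
assert (interp_c : lagr_interp p tau V x - c
                   = lagr_interp p tau V x - lagr_interp p tau (fun _ => c) x)
  by (rewrite lagr_interp_const; reflexivity).
replace (f (tn + (x + 1) * dt / 2) (lagr_interp p tau V x) - f tn c)
  with ((f (tn + (x + 1) * dt / 2) (lagr_interp p tau V x) - f (tn + (x + 1) * dt / 2) c)
        + (f (tn + (x + 1) * dt / 2) c - f tn c)) by ring.
eapply Rle_trans; [apply Rabs_triang | apply Rplus_le_compat; [| apply HE, hx]].
eapply Rle_trans; [apply f_lip|]; rewrite interp_c, Rmult_assoc.
apply Rmult_le_compat_l; [assumption | apply lagr_interp_lipschitz, hx].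
Qed.

End NonlinearTerm.

Fixpoint euler_const (Lf M0 Mt : R) (m : nat) : R :=
  match m with
  | O => 0
  | S k => (1 + Lf) * euler_const Lf M0 Mt k + (Lf * M0 + Mt)
  end.

Lemma euler_const_ge0 Lf M0 Mt m : 0 <= Lf -> 0 <= M0 -> 0 <= Mt -> 0 <= euler_const Lf M0 Mt m.
Proof. intros; induction m; simpl; nra. Qed.

Lemma Rabs_scaled_le dt x y : 0 <= dt -> Rabs x <= y -> Rabs (- (dt / 2) * x) <= dt / 2 * y.
Proof.
intros dt0 H; rewrite Rabs_mult, Rabs_Ropp, (Rabs_right (dt / 2)) by lra.
apply Rmult_le_compat_l; lra.
Qed.

Section FixedPointError.
Variables (p : nat) (tau : nat -> R).
Hypothesis tau_incr : forall m, (m < p)%nat -> tau m < tau (S m).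
Hypothesis tau_first : -1 < tau O.
Hypothesis tau_last : tau p = 1.
Variable f : R -> R -> R.
Hypothesis f_cont : continuous2 f.
Variable Lf : R.
Hypothesis Lf_ge0 : 0 <= Lf.
Hypothesis f_lip : forall t x y, Rabs (f t x - f t y) <= Lf * Rabs (x - y).
Variable Lam : R.
Hypothesis lagr_le : forall m x, (m <= p)%nat -> -1 <= x <= 1 -> Rabs (lagr p tau m x) <= Lam.
Variable CL : R.
Hypothesis CL_ge0 : 0 <= CL.
Hypothesis Lmul_le : forall V beta,
  (forall i, (i <= p)%nat -> Rabs (Lmul p tau V i) <= beta) -> vnorm p V <= CL * beta.
Variables M0 Mt : R.
Hypothesis Mt_ge0 : 0 <= Mt.
Variables tn dt un : R.
Hypothesis dt_pos : 0 < dt <= 1.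
Hypothesis f_un_le : Rabs (f tn un) <= M0.
Hypothesis f_time : forall s, tn <= s <= tn + dt -> Rabs (f s un - f tn un) <= Mt * dt.
Hypothesis contraction : CL * Lf * Lam * Lam * dt <= 1 / 2.

Let Lam_ge0 := Lam_ge0 p tau Lam lagr_le.
Let lagr_sum1 := lagr_sum1 p tau tau_incr.

Let Fvec_near := Fvec_near_const p tau f f_cont Lf Lf_ge0 f_lip Lam lagr_le lagr_sum1.

Let f_time_ref x : -1 <= x <= 1 -> Rabs (f (tn + (x + 1) * dt / 2) un - f tn un) <= Mt * dt.
Proof. intros hx; apply f_time; split; nra. Qed.

Variable Uh : nat -> R.
Hypothesis Uh_dg : dg_system p tau f tn dt un Uh.

Lemma Lmul_Uh i : (i <= p)%nat ->
  Lmul p tau Uh i = - (dt / 2) * Fvec p tau f tn dt Uh i - Bvec p tau un i.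
Proof. intros ip; pose proof (Uh_dg i ip); lra. Qed.

Lemma Lmul_Uh_minus_un i : (i <= p)%nat ->
  Lmul p tau (fun m => Uh m - un) i = - (dt / 2) * Fvec p tau f tn dt Uh i.
Proof.
intros ip; rewrite Lmul_minus, Lmul_Uh, (Lmul_const p tau tau_incr tau_last) by exact ip.
unfold Bvec; ring.
Qed.

Let A1 := 2 * CL * Lam * (Mt + M0).

Lemma Uh_near_un : vnorm p (fun m => Uh m - un) <= A1 * dt.
Proof.
set (a := vnorm p (fun m => Uh m - un)).
assert (a0 : 0 <= a) by apply vnorm_ge0.
assert (Ha : a <= CL * (dt / 2 * (2 * ((Lf * Lam * a + Mt * dt) * Lam) + M0 * (2 * Lam)))).
{ apply Lmul_le; intros i ip; rewrite Lmul_Uh_minus_un by exact ip.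
  apply Rabs_scaled_le; [lra|].
  pose proof (Fvec_near tn dt Uh un (Mt * dt) i ip f_time_ref) as HF.
  pose proof (RInt_lagr_bound p tau Lam lagr_le i ip) as HI.
  set (F := Fvec p tau f tn dt Uh i) in *; set (I := Defs.RInt (lagr p tau i) (-1) 1) in *.
  replace F with ((F - f tn un * I) + f tn un * I) by ring.
  eapply Rle_trans; [apply Rabs_triang | apply Rplus_le_compat; [exact HF|]].
  rewrite Rabs_mult; apply Rmult_le_compat; auto using Rabs_pos. }
assert (CL * Lf * Lam * Lam * dt * a <= 1 / 2 * a) by (apply Rmult_le_compat_r; assumption).
assert (CL * Lam * dt * (Mt * dt) <= CL * Lam * dt * Mt).
{ apply Rmult_le_compat_l; [apply Rmult_le_pos; [apply Rmult_le_pos|]; lra | nra]. }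
unfold A1; nra.
Qed.

Let A2 := CL * Lam * (Lf * Lam * A1 + Mt).

Definition linearized (m : nat) := un + dt / 2 * f tn un * (tau m + 1).

Lemma Uh_near_linearized : vnorm p (fun m => Uh m - linearized m) <= A2 * (dt * dt).
Proof.
pose proof Uh_near_un as Ha; set (a := vnorm p (fun m => Uh m - un)) in *.
apply Rle_trans with (CL * (dt / 2 * (2 * ((Lf * Lam * a + Mt * dt) * Lam)))).
- apply Lmul_le; intros i ip.
  rewrite (Lmul_ext _ _ _ (fun m => (Uh m - un) - dt / 2 * f tn un * (tau m + 1)))
    by (intros; unfold linearized; ring).
  rewrite Lmul_minus, Lmul_Uh_minus_un, (Lmul_affine p tau tau_incr tau_last) by exact ip.
  set (I := Defs.RInt (lagr p tau i) (-1) 1).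
  replace (- (dt / 2) * Fvec p tau f tn dt Uh i - - (dt / 2 * f tn un) * I)
    with (- (dt / 2) * (Fvec p tau f tn dt Uh i - f tn un * I)) by ring.
  apply Rabs_scaled_le; [lra|].
  exact (Fvec_near tn dt Uh un (Mt * dt) i ip f_time_ref).
- assert (Lf * Lam * a <= Lf * Lam * (A1 * dt)) by (apply Rmult_le_compat_l; [nra | exact Ha]).
  apply Rle_trans with (CL * (dt * Lam * (Lf * Lam * (A1 * dt) + Mt * dt))); [|unfold A2; right; ring].
  apply Rmult_le_compat_l; [assumption|].
  replace (dt / 2 * (2 * ((Lf * Lam * a + Mt * dt) * Lam)))
    with (dt * Lam * (Lf * Lam * a + Mt * dt)) by field.
  apply Rmult_le_compat_l; nra.
Qed.

Lemma euler0_near_linearized m : (m <= p)%nat ->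
  Rabs (euler0 tau f tn dt un m - linearized m) <= euler_const Lf M0 Mt m * (dt * dt).
Proof.
assert (M0_ge0 : 0 <= M0) by (pose proof (Rabs_pos (f tn un)); lra).
induction m as [|m IH]; intros mp; simpl euler0; simpl euler_const.
- unfold node, linearized.
  replace (un + (tn + (tau 0 + 1) * dt / 2 - tn) * f tn un - (un + dt / 2 * f tn un * (tau 0 + 1)))
    with 0 by field.
  rewrite Rabs_R0; lra.
- pose proof (tau_range p tau tau_incr tau_first tau_last m ltac:(lia)).
  pose proof (tau_incr m ltac:(lia)); pose proof (tau_range p tau tau_incr tau_first tau_last (S m) mp).
  specialize (IH ltac:(lia)).
  set (U := euler0 tau f tn dt un m) in *; set (e := U - linearized m) in *.
  set (tm := node tau tn dt m); set (D := node tau tn dt (S m) - tm).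
  assert (HD : 0 <= D <= dt) by (unfold D, tm, node; split; nra).
  assert (Htm : tn <= tm <= tn + dt) by (unfold tm, node; split; nra).
  assert (step : U + D * f tm U - linearized (S m) = e + D * (f tm U - f tn un))
    by (unfold e, D, tm, node, linearized; field).
  assert (HU : Rabs (U - un) <= Rabs e + dt * M0).
  { replace (U - un) with (e + f tn un * (dt / 2 * (tau m + 1))) by (unfold e, linearized; ring).
    eapply Rle_trans; [apply Rabs_triang | apply Rplus_le_compat_l].
    rewrite Rabs_mult, (Rabs_right (dt / 2 * (tau m + 1))) by nra.
    assert (0 <= M0 * dt * (1 - tau m)) by (apply Rmult_le_pos; nra).
    apply Rle_trans with (M0 * (dt / 2 * (tau m + 1))); [apply Rmult_le_compat_r|]; nra. }
  assert (Hf : Rabs (f tm U - f tn un) <= Lf * (Rabs e + dt * M0) + Mt * dt).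
  { replace (f tm U - f tn un) with ((f tm U - f tm un) + (f tm un - f tn un)) by ring.
    eapply Rle_trans; [apply Rabs_triang | apply Rplus_le_compat; [| apply f_time, Htm]].
    eapply Rle_trans; [apply f_lip | apply Rmult_le_compat_l; assumption]. }
  rewrite step; eapply Rle_trans; [apply Rabs_triang|]; rewrite Rabs_mult, (Rabs_right D) by lra.
  pose proof (euler_const_ge0 Lf M0 Mt m Lf_ge0 M0_ge0 Mt_ge0).
  assert (D * Rabs (f tm U - f tn un) <= dt * (Lf * (Rabs e + dt * M0) + Mt * dt))
    by (apply Rmult_le_compat; try apply Rabs_pos; lra).
  assert (dt * (Lf * Rabs e) <= Lf * (euler_const Lf M0 Mt m * (dt * dt))).
  { pose proof (Rabs_pos e).
    apply Rle_trans with (Lf * Rabs e); [|apply Rmult_le_compat_l; assumption].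
    rewrite <- (Rmult_1_l (Lf * Rabs e)) at 2; apply Rmult_le_compat_r; nra. }
  nra.
Qed.

Variable Useq : nat -> nat -> R.
Hypothesis Useq_fp : fp_iteration p tau f tn dt un Useq.

Definition initial_error_const := A2 + sum_f_R0 (euler_const Lf M0 Mt) p.

Lemma initial_error : vnorm p (fun m => Uh m - Useq O m) <= initial_error_const * (dt * dt).
Proof.
eapply Rle_trans; [apply (vnorm_triangle p Uh (Useq O) linearized)|].
unfold initial_error_const; rewrite Rmult_plus_distr_r; apply Rplus_le_compat; [apply Uh_near_linearized|].
unfold vnorm; rewrite Rmult_comm, scal_sum; apply sum_Rle; intros m mp.
rewrite (proj1 Useq_fp m mp), Rabs_minus_sym; apply euler0_near_linearized, mp.
Qed.

Lemma iteration_error k :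
  vnorm p (fun m => Uh m - Useq k m) <= (CL * Lf * Lam * Lam * dt) ^ k * (initial_error_const * (dt * dt)).
Proof.
set (q := CL * Lf * Lam * Lam * dt).
assert (q0 : 0 <= q) by (unfold q; repeat apply Rmult_le_pos; lra).
induction k as [|k IH]; [simpl; rewrite Rmult_1_l; apply initial_error|].
apply Rle_trans with (q * vnorm p (fun m => Uh m - Useq k m)).
- replace (q * vnorm p (fun m => Uh m - Useq k m))
    with (CL * (dt / 2 * (2 * (Lf * Lam * vnorm p (fun m => Uh m - Useq k m) * Lam))))
    by (unfold q; field).
  apply Lmul_le; intros i ip.
  rewrite Lmul_minus, Lmul_Uh, (proj2 Useq_fp k i ip) by exact ip.
  replace (- (dt / 2) * Fvec p tau f tn dt Uh i - Bvec p tau un i -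
           (- (dt / 2) * Fvec p tau f tn dt (Useq k) i - Bvec p tau un i))
    with (- (dt / 2) * (Fvec p tau f tn dt Uh i - Fvec p tau f tn dt (Useq k) i)) by ring.
  apply Rabs_scaled_le; [lra|].
  exact (Fvec_lipschitz p tau f f_cont Lf Lf_ge0 f_lip Lam lagr_le tn dt Uh (Useq k) i ip).
- replace (q ^ S k * (initial_error_const * (dt * dt))) with (q * (q ^ k * (initial_error_const * (dt * dt)))) by (simpl; ring).
  apply Rmult_le_compat_l; assumption.
Qed.
End FixedPointError.

Lemma lagr_bounded p tau : exists Lam,
  forall m x, (m <= p)%nat -> -1 <= x <= 1 -> Rabs (lagr p tau m x) <= Lam.
Proof.
destruct (continuous_bounded (fun x => vnorm p (fun m => lagr p tau m x)) (-1) 1) as [Lam HLam].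
{ intros x _; apply (continuity_pt_finite_SF (fun m y => Rabs (lagr p tau m y))); intros m _.
  apply (continuity_pt_comp (lagr p tau m) Rabs); [apply lagr_continuity | apply Rcontinuity_abs]. }
exists Lam; intros m x mp hx.
eapply Rle_trans; [apply (vnorm_ge_abs p (fun m => lagr p tau m x) m mp)|].
eapply Rle_trans; [apply Rle_abs | apply HLam, hx].
Qed.

Lemma C_k2_continuous k f : C_k2 k f -> continuous2 f.
Proof. intros [D [D00 [Dc _]]]; rewrite <- D00; apply Dc; lia. Qed.

Lemma C_k2_time_lipschitz k f a b c d : (0 < k)%nat -> C_k2 k f -> exists Mt, 0 <= Mt /\
  forall s t y, a <= s <= b -> a <= t <= b -> c <= y <= d ->
    Rabs (f s y - f t y) <= Mt * Rabs (s - t).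
Proof.
intros k0 [D [D00 [Dc Dd]]].
destruct (continuous2_bounded (D 1%nat 0%nat) a b c d) as [M HM]; [apply Dc; lia|].
exists (Rabs M); split; [apply Rabs_pos|].
assert (mvt : forall s t y, a <= s < t -> t <= b -> c <= y <= d ->
               Rabs (f t y - f s y) <= Rabs M * Rabs (t - s)).
{ intros s t y hs ht hy.
  destruct (MVT_cor2 (fun r => f r y) (fun r => D 1%nat 0%nat r y) s t (proj2 hs)) as [r [e hr]].
  { intros r _; rewrite <- D00; apply (Dd 0%nat 0%nat ltac:(lia)). }
  rewrite e, Rabs_mult; apply Rmult_le_compat_r; [apply Rabs_pos|].
  eapply Rle_trans; [apply HM; lra | apply Rle_abs]. }
intros s t y hs ht hy; destruct (Rtotal_order s t) as [st|[<-|ts]].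
- rewrite Rabs_minus_sym, (Rabs_minus_sym s); apply mvt; lra.
- rewrite !Rminus_diag, Rabs_R0; lra.
- apply mvt; lra.
Qed.

Lemma power_error_le q C dt h K : 0 <= q -> 0 < dt <= h ->
  (q * dt) ^ K * (C * (dt * dt)) <= (Rabs C * q ^ K + 1) * h ^ (K + 2).
Proof.
intros q0 hdt.
assert (dK : 0 <= dt ^ K <= h ^ K) by (split; [apply pow_le | apply pow_incr]; lra).
assert (0 <= q ^ K) by (apply pow_le, q0).
assert (0 <= h ^ K * (h * h)) by (apply Rmult_le_pos; [apply pow_le|]; nra).
assert (dt * dt <= h * h) by nra.
rewrite Rpow_mult_distr, pow_add; simpl pow; rewrite Rmult_1_r.
apply Rle_trans with (Rabs C * q ^ K * (h ^ K * (h * h))); [|nra].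
replace (q ^ K * dt ^ K * (C * (dt * dt))) with (C * q ^ K * (dt ^ K * (dt * dt))) by ring.
apply Rle_trans with (Rabs C * q ^ K * (dt ^ K * (dt * dt))).
- apply Rmult_le_compat_r; [apply Rmult_le_pos; nra | apply Rmult_le_compat_r; [assumption | apply Rle_abs]].
- apply Rmult_le_compat_l; [apply Rmult_le_pos; [apply Rabs_pos | assumption]|].
  apply Rmult_le_compat; nra.
Qed.

Lemma small_step q dt : 0 <= q -> 0 < dt <= Rmin 1 (/ (2 * (q + 1))) -> dt <= 1 /\ q * dt <= 1 / 2.
Proof.
intros q0 hdt; pose proof (Rmin_l 1 (/ (2 * (q + 1)))); pose proof (Rmin_r 1 (/ (2 * (q + 1)))).
split; [lra|].
apply Rle_trans with (q * / (2 * (q + 1))); [apply Rmult_le_compat_l; lra|].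
apply Rmult_le_reg_r with (2 * (q + 1)); [lra|].
rewrite Rmult_assoc, Rinv_l; lra.
Qed.

Theorem lemma3 (p : nat) (T u0 : R) (f : R -> R -> R) (u : R -> R)
    (tau w : nat -> R) :
  0 < T ->
  C_k2 (2 * p + 1) f ->
  lipschitz_in_u f ->
  u 0 = u0 ->
  (forall t, 0 <= t <= T -> derivable_pt_lim u t (f t (u t))) ->
  right_gauss_radau p tau w ->
  forall K : nat,
  exists C h0, 0 < C /\ 0 < h0 /\
    forall h tn dt, 0 < h <= h0 -> 0 <= tn -> 0 < dt <= h -> tn + dt <= T ->
    forall (Uh : nat -> R) (Useq : nat -> nat -> R),
      dg_system p tau f tn dt (u tn) Uh ->
      fp_iteration p tau f tn dt (u tn) Useq ->
      forall m, (m <= p)%nat ->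
        Rabs (Uh m - Useq K m) <= C * h ^ (K + 2).
Proof.
intros _ Hk [Lf [Lf_ge0 f_lip]] _ Hu [tau_first [tau_incr [tau_last _]]] K.
destruct (continuous_bounded u 0 T) as [Mu HMu].
{ intros t ht; apply derivable_continuous_pt; exists (f t (u t)); apply Hu, ht. }
destruct (continuous2_bounded f 0 T (-Mu) Mu (C_k2_continuous _ _ Hk)) as [M0 HM0].
destruct (C_k2_time_lipschitz (2 * p + 1) f 0 T (-Mu) Mu ltac:(lia) Hk) as [Mt [Mt_ge0 HMt]].
destruct (lagr_bounded p tau) as [Lam HLam].
destruct (Lmul_bound p tau tau_incr tau_first tau_last) as [CL [CL_pos HCL]].
set (q := CL * Lf * Lam * Lam).
assert (q0 : 0 <= q) by (unfold q; pose proof (Lam_ge0 p tau Lam HLam); repeat apply Rmult_le_pos; lra).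
exists (Rabs (initial_error_const p Lf Lam CL M0 Mt) * q ^ K + 1), (Rmin 1 (/ (2 * (q + 1)))).
split; [pose proof (pow_le q K q0); pose proof (Rabs_pos (initial_error_const p Lf Lam CL M0 Mt)); nra|].
split; [apply Rmin_glb_lt; [lra | apply Rinv_0_lt_compat; lra]|].
intros h tn dt [h0 hh0] tn0 hdt hT Uh Useq Hdg Hfp m mp.
destruct (small_step q dt q0 ltac:(lra)) as [dt1 qdt].
assert (Hun : Rabs (u tn) <= Mu) by (apply HMu; lra).
eapply Rle_trans; [apply (vnorm_ge_abs p (fun m => Uh m - Useq K m) m mp)|].
eapply Rle_trans; [|apply (power_error_le q _ dt h K q0 hdt)].
apply (iteration_error p tau tau_incr tau_first tau_last f (C_k2_continuous _ _ Hk) Lf Lf_ge0 f_lip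
         Lam HLam CL (Rlt_le _ _ CL_pos) HCL M0 Mt Mt_ge0 tn dt (u tn)); try assumption.
- lra.
- apply HM0; [lra | apply Rabs_le_between, Hun].
- intros s hs; eapply Rle_trans; [apply HMt; [lra | lra | apply Rabs_le_between, Hun]|].
  apply Rmult_le_compat_l; [exact Mt_ge0 | apply Rabs_le_between'; lra].
Qed.
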